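(* Let $X$ and $Y$ be real-valued random variables and consider the two Bayesian causal models $M_{X\rightarrow Y}$ and $M_{Y\rightarrow X}$ defined as follows. In $M_{X\rightarrow Y}$, the marginal density of the cause is $p(x\mid M_{X\rightarrow Y})=\mathcal{N}(x\mid 0,1)$ and the conditional density of the effect is $p(y\mid x,\boldsymbol{\theta}_Y,M_{X\rightarrow Y})=\mathcal{N}\big(y\mid \mu(x;\boldsymbol{\theta}_Y),\sigma^2(x;\boldsymbol{\theta}_Y)\big)$, where $\mu(\cdot;\boldsymbol{\theta}_Y)=f_{Y,1}(\cdot;\boldsymbol{\theta}_Y)$ and $\sigma(\cdot;\boldsymbol{\theta}_Y)=\zeta\big(f_{Y,2}(\cdot;\boldsymbol{\theta}_Y)\big)$ for a neural network $\mathbf{f}_Y=(f_{Y,1},f_{Y,2}):\mathbb{R}\to\mathbb{R}^2$ with one hidden layer and parameters $\boldsymbol{\theta}_Y$, and $\zeta$ is a positive link function (e.g. $\exp$ or softplus). The parameters $\boldsymbol{\theta}_Y$ have independent zero-mean Gaussian priors: each weight $w_{ij}\sim\mathcal{N}(0,z_{ij}^2)$ and each bias $b_j\sim\mathcal{N}(0,\sigma_b^2)$. The model $M_{Y\rightarrow X}$ is defined symmetrically with the roles of $X$ and $Y$ exchanged (marginal $\mathcal{N}(y\mid0,1)$, conditional $\mathcal{N}(x\mid \mu(y;\boldsymbol{\theta}_X),\sigma^2(y;\boldsymbol{\theta}_X))$ given by an analogous one-hidden-layer network with the same type of Gaussian priors). Then $M_{X\rightarrow Y}$ and $M_{Y\rightarrow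 X}$ are not separable-compatible.
   Context: A Bayesian causal model $M_{X\rightarrow Y}$ consists of a class $\mathcal{C}_X$ of marginal distributions $m_X$ of $X$, a class $\mathcal{C}_{Y\mid X}$ of conditional distributions $c_{Y\mid X}$ of $Y$ given $X$, and a factorized prior $\pi_{X\rightarrow Y}(m_X,c_{Y\mid X})=\pi_X(m_X)\pi_{Y\mid X}(c_{Y\mid X})$; similarly $M_{Y\rightarrow X}$ has $\mathcal{C}_Y$, $\mathcal{C}_{X\mid Y}$ and prior $\pi_{Y\rightarrow X}(m_Y,c_{X\mid Y})=\pi_Y(m_Y)\pi_{X\mid Y}(c_{X\mid Y})$. Let $\gamma:\mathcal{C}_X\times\mathcal{C}_{Y\mid X}\to\mathcal{C}_Y\times\mathcal{C}_{X\mid Y}$ be the bijection mapping $(m_X,c_{Y\mid X})$ to the unique $(m_Y,c_{X\mid Y})$ with $m_X(x)c_{Y\mid X}(y\mid x)=m_Y(y)c_{X\mid Y}(x\mid y)$ for all $x,y$ (i.e. the anti-causal factorization of the same joint). The two models are called separable-compatible if such a bijection $\gamma$ exists, the push-forward $\gamma_\sharp\pi_{X\rightarrow Y}$ is separable with respect to $\mathcal{C}_Y\times\mathcal{C}_{X\mid Y}$ and equals $\pi_Y(m_Y)\pi_{X\mid Y}(c_{X\mid Y})$, and the push-forward $\gamma^{-1}_\sharp\pi_{Y\rightarrow X}$ is separable with respect to $\mathcal{C}_X\times\mathcal{C}_{Y\mid X}$ (equivalently: the anti-causal factorization of each model lies in the same distribution classes as the other model, with a prior that factorizes into independent priors matching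 the other model's priors). *)

From HB Require Import structures.
From mathcomp Require Import all_boot all_order all_algebra.
From mathcomp Require Import all_classical all_reals all_analysis.
From mathcomp Require Import normal_distribution.

Set Implicit Arguments.
Unset Strict Implicit.
Unset Printing Implicit Defensive.

Import Order.TTheory GRing.Theory Num.Theory.
Local Open Scope classical_set_scope.
Local Open Scope ring_scope.

(*   A conditional density is c : R -> R -> R with                     *)
(*       c u v = density of the EFFECT at v given the CAUSE equal to u. *)

Definition dens (R : realType) := R -> R.
Definition cdens (R : realType) := R -> R -> R.
HB.instance Definition _ (R : realType) := gen_eqMixin (dens R).
HB.instance Definition _ (R : realType) := gen_choiceMixin (dens R).
HB.instance Definition _ (R : realType) := gen_eqMixin (cdens R).
HB.instance Definition _ (R : realType) := gen_choiceMixin (cdens R).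
HB.instance Definition _ (R : realType) := isPointed.Build (dens R) (fun _ => 0%R).
HB.instance Definition _ (R : realType) := isPointed.Build (cdens R) (fun _ _ => 0%R).

Definition cyl_dens (R : realType) : set (set (dens R)) :=
  [set S | exists (x : R) (B : set R), measurable B /\ S = (fun f => f x) @^-1` B].

Definition cyl_cdens (R : realType) : set (set (cdens R)) :=
  [set S | exists (u v : R) (B : set R),
      measurable B /\ S = (fun c => c u v) @^-1` B].

Notation densT R := (g_sigma_algebraType (@cyl_dens R)).
Notation cdensT R := (g_sigma_algebraType (@cyl_cdens R)).

(* A Bayesian causal model  cause -> effect :                          *)
(*   a class of marginals of the cause, a class of conditionals of the *)
(*   effect given the cause, and independent priors on both classes   *)

Record bcm (R : realType) := BCM {
  bcm_CM : set (densT R);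
  bcm_CC : set (cdensT R);
  bcm_piM : set (densT R) -> \bar R;
  bcm_piC : set (cdensT R) -> \bar R }.

(* Product of two priors  pi1(m) pi2(c),  as a set function on the   *)
(* product sigma-algebra (Fubini formula for the product measure).    *)
Definition prior_prod (R : realType) (p1 : set (densT R) -> \bar R)
    (p2 : set (cdensT R) -> \bar R) : set (densT R * cdensT R) -> \bar R :=
  fun S => (\int[p1]_m p2 [set c | S (m, c)])%E.

Definition bcm_prior (R : realType) (M : bcm R) :=
  prior_prod (bcm_piM M) (bcm_piC M).

Definition separable_compatible (R : realType) (M1 M2 : bcm R) : Prop :=
  exists gamma : densT R * cdensT R -> densT R * cdensT R,
  exists delta : densT R * cdensT R -> densT R * cdensT R,
    measurable_fun setT gamma /\ measurable_fun setT delta /\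
      set_bij (bcm_CM M1 `*` bcm_CC M1) (bcm_CM M2 `*` bcm_CC M2) gamma /\
      (forall p, (bcm_CM M1 `*` bcm_CC M1) p -> delta (gamma p) = p) /\
      (forall q, (bcm_CM M2 `*` bcm_CC M2) q -> gamma (delta q) = q) /\
      (* gamma maps a causal factorization to the anti-causal one of the same joint *)
      (forall p, (bcm_CM M1 `*` bcm_CC M1) p ->
         forall x y : R, p.1 x * p.2 x y = (gamma p).1 y * (gamma p).2 y x) /\
      (forall S, measurable S ->
         pushforward (bcm_prior M1) gamma S = bcm_prior M2 S) /\
      (* gamma^{-1}_# pi_{Y->X} is separable w.r.t. C_X x C_{Y|X} *)
      (exists (q1 : probability (densT R) R) (q2 : probability (cdensT R) R),
        forall S, measurable S ->
          pushforward (bcm_prior M2) delta S = prior_prod q1 q2 S).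

(* One-hidden-layer network f = (f1, f2) : R -> R^2 of width H.         *)
(* Parameter vector theta : (4H+2).-tuple R with layout                 *)
(*   theta_j        (j < H) : input->hidden weight of hidden unit j     *)
(*   theta_(H+j)    (j < H) : bias of hidden unit j                     *)
(*   theta_(2H+j)   (j < H) : hidden unit j -> output 1 weight          *)
(*   theta_(3H+j)   (j < H) : hidden unit j -> output 2 weight          *)
(*   theta_(4H), theta_(4H+1) : biases of outputs 1 and 2.              *)

Definition npar (H : nat) : nat := (4 * H + 2)%N.

Definition net_out (R : realType) (H : nat) (act : R -> R)
    (theta : (npar H).-tuple R) (o : nat) (x : R) : R :=
  nth 0 theta (4 * H + o)%N +
  \sum_(j < H) nth 0 theta ((2 + o) * H + j)%N *
               act (nth 0 theta j * x + nth 0 theta (H + j)%N).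

Definition is_bias (H k : nat) : bool := (H <= k < 2 * H)%N || (4 * H <= k)%N.

Definition prior_sd (R : realType) (H : nat) (z : nat -> R) (sb : R) (k : nat) : R :=
  if is_bias H k then sb else z k.

Definition indep_gauss_prior (R : realType) (n : nat) (sd : nat -> R)
    (mu : probability (n.-tuple R) R) : Prop :=
  forall B : 'I_n -> set R, (forall k, measurable (B k)) ->
    mu [set t : n.-tuple R | forall k : 'I_n, B k (tnth t k)] =
    (\prod_(k < n) normal_prob 0 (sd k) (B k))%E.

Definition net_cond (R : realType) (H : nat) (act zeta : R -> R)
    (theta : (npar H).-tuple R) : cdensT R :=
  fun u v => normal_pdf (net_out act theta 0 u) (zeta (net_out act theta 1 u)) v.

Definition std_normal_dens (R : realType) : densT R := fun x => normal_pdf 0 1 x.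

Definition nn_bcm (R : realType) (H : nat) (act zeta : R -> R)
    (mu : probability ((npar H).-tuple R) R) : bcm R :=
  BCM [set @std_normal_dens R]
      (range (@net_cond R H act zeta))
      (dirac (@std_normal_dens R))
      (pushforward mu (@net_cond R H act zeta)).

From HB Require Import structures.
From mathcomp Require Import all_boot all_order all_algebra.
From mathcomp Require Import all_classical all_reals all_analysis.
From mathcomp Require Import normal_distribution.
From mathcomp Require Import ring lra zify.
Import Order.TTheory GRing.Theory Num.Theory.
Local Open Scope classical_set_scope.
Local Open Scope ring_scope.

(* Zeroing every network weight and setting the bias of the mean output to 1
   puts the joint N(x | 0, 1) N(y | 1, zeta(0)^2) into the model X -> Y.  The
   model Y -> X only admits the standard normal marginal for Y, so gamma must
   refactor this joint as N(y | 0, 1) c(x | y) with c(. | y) Gaussian; then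
   c(. | y) is proportional to N(0, 1), and a Gaussian proportional to the
   standard one is the standard one (compare log-densities at -1, 0, 1).
   Substituting back gives N(y | 1, zeta(0)^2) = N(y | 0, 1), whose means differ. *)

Section gaussian_density.
Context {R : realType}.
Implicit Types m s x : R.

Lemma normal_pdf_gt0 m s x : s != 0 -> 0 < normal_pdf m s x.
Proof.
by move=> s0; rewrite normal_pdfE // mulr_gt0 ?normal_peak_gt0 ?expR_gt0.
Qed.

Lemma scaled_expR_eq_sub {P C a1 b1 a2 b2 : R} : 0 < P ->
  P * expR a1 = C * expR b1 -> P * expR a2 = C * expR b2 -> a1 - b1 = a2 - b2.
Proof.
move=> P_gt0 e1 e2; apply: expR_inj; rewrite !expRB.
apply: (mulfI (lt0r_neq0 P_gt0)); rewrite !mulrA e1 e2.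
by rewrite !mulfK ?gt_eqF ?expR_gt0.
Qed.

Lemma normal_pdf_propto_std {m s K : R} : s != 0 ->
  (forall x, normal_pdf m s x = K * normal_pdf 0 1 x) -> m = 0 /\ s ^+ 2 = 1.
Proof.
move=> s0 propto.
have logdiff x : - (x - m) ^+ 2 / (s ^+ 2 *+ 2) + x ^+ 2 / 2 =
                 - (0 - m) ^+ 2 / (s ^+ 2 *+ 2).
  have := propto x; have := propto 0.
  rewrite !normal_pdfE ?oner_neq0 // /normal_fun !mulrA => e0 ex.
  have := scaled_expR_eq_sub (normal_peak_gt0 s0) ex e0.
  by rewrite expr1n !subr0 expr0n /= oppr0 mul0r subr0 !mulNr opprK.
have t_neq0 : s ^+ 2 *+ 2 != 0 by rewrite mulrn_eq0 /= sqrf_eq0.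
set u := (s ^+ 2 *+ 2)^-1 in logdiff.
have tu : (s ^+ 2 *+ 2) * u = 1 by rewrite mulfV.
have e1 := logdiff 1; have em1 := logdiff (-1).
rewrite -mulr_natr in tu.
have m0 : m = 0 by nra.
split => //; nra.
Qed.

Lemma normal_pdf_std_of_factor_swap {a s : R} {m s' : R -> R} :
  (forall y, 0 < s' y) ->
  (forall x y, normal_pdf 0 1 x * normal_pdf a s y =
               normal_pdf 0 1 y * normal_pdf (m y) (s' y) x) ->
  forall y, normal_pdf a s y = normal_pdf 0 1 y.
Proof.
move=> s'_gt0 swap y.
have phiy_neq0 : normal_pdf 0 1 y != 0 by rewrite gt_eqF ?normal_pdf_gt0.
have propto x : normal_pdf (m y) (s' y) x =
                normal_pdf a s y / normal_pdf 0 1 y * normal_pdf 0 1 x.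
  by apply: (mulfI phiy_neq0); rewrite -swap; field.
have [m0 /eqP] := normal_pdf_propto_std (lt0r_neq0 (s'_gt0 y)) propto.
rewrite sqrp_eq1 ?ltW // => /eqP s'1.
have := swap 0 y; rewrite m0 s'1 mulrC => /mulIf; apply.
by rewrite gt_eqF ?normal_pdf_gt0.
Qed.
End gaussian_density.

Section bias_only_network.
Context {R : realType} {H : nat}.

Definition bias_theta (b : nat -> R) : (npar H).-tuple R :=
  Tuple (introT eqP (size_mkseq
    (fun k => if (4 * H <= k)%N then b (k - 4 * H)%N else 0) (npar H))).

Lemma net_out_bias_theta (act : R -> R) b o u : (o < 2)%N ->
  net_out act (bias_theta b) o u = b o.
Proof.
move=> o_lt2; rewrite /net_out /= nth_mkseq /npar; last by lia.
rewrite leq_addr addKn big1 ?addr0 // => j _.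
have j_lt := ltn_ord j.
by rewrite nth_mkseq ?ifF ?mul0r //; nia.
Qed.

Lemma net_cond_bias_theta (act zeta : R -> R) b u :
  net_cond act zeta (bias_theta b) u = normal_pdf (b 0%N) (zeta (b 1%N)).
Proof. by rewrite /net_cond !net_out_bias_theta. Qed.

End bias_only_network.

Theorem proposition4p2 (R : realType)
  (* model X -> Y : network f_Y of width H, activation act, link zeta *)
  (H : nat) (act zeta : R -> R) (z : nat -> R) (sb : R)
  (mu : probability ((npar H).-tuple R) R)
  (* model Y -> X : network f_X of width H', activation act', link zeta' *)
  (H' : nat) (act' zeta' : R -> R) (z' : nat -> R) (sb' : R)
  (mu' : probability ((npar H').-tuple R) R) :
  (0 < H)%N -> (0 < H')%N ->
  (forall t, 0 < zeta t) -> (forall t, 0 < zeta' t) ->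
  (forall k, 0 < z k) -> 0 < sb -> (forall k, 0 < z' k) -> 0 < sb' ->
  indep_gauss_prior (prior_sd H z sb) mu ->
  indep_gauss_prior (prior_sd H' z' sb') mu' ->
  ~ separable_compatible (nn_bcm act zeta mu) (nn_bcm act' zeta' mu').
Proof.
move=> _ _ zeta_gt0 zeta'_gt0 _ _ _ _ _ _
  [g [_ [_ [_ [[g_maps _ _] [_ [_ [g_factor _]]]]]]]].
pose th : (npar H).-tuple R := bias_theta (fun o => (o == 0%N)%:R).
pose p : densT R * cdensT R := (@std_normal_dens R, net_cond act zeta th).
have p_in : (bcm_CM (nn_bcm act zeta mu) `*` bcm_CC (nn_bcm act zeta mu)) p.
  by split => //=; exists th.
have [/= gp1 [th' _ gp2]] := g_maps p p_in.
have swap x y : normal_pdf 0 1 x * normal_pdf 1 (zeta 0) y =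
    normal_pdf 0 1 y * net_cond act' zeta' th' y x.
  by have := g_factor p p_in x y; rewrite /= gp1 gp2 net_cond_bias_theta.
have propto y : normal_pdf 1 (zeta 0) y = 1 * normal_pdf 0 1 y.
  by rewrite mul1r (normal_pdf_std_of_factor_swap (fun y => zeta'_gt0 _) swap).
have [/eqP] := normal_pdf_propto_std (lt0r_neq0 (zeta_gt0 0)) propto.
by rewrite oner_eq0.
Qed.
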